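(* Let $M \in \mathbb{R}^{m,n}$ and $\epsilon \ge 0$. Let $\|\cdot\|$ be a column-wise matrix norm on $\mathbb{R}^{m,n}$, i.e. $\|A\| = \sum_{i=1}^n \alpha_i \|A(:,i)\|_c$ for some constants $\alpha_i > 0$ and some vector norm $\|\cdot\|_c$ on $\mathbb{R}^m$. Consider the two optimization problems \[ \text{(P1)}\quad \min_{X \in \mathbb{R}^{n,n}_+} \|X\|_{1,\infty} \ \text{ s.t. } \ \|M - MX\| \le \epsilon,\ X_{ij} \le 1 \ \forall i,j, \] \[ \text{(P2)}\quad \min_{X \in \mathbb{R}^{n,n}_+} \operatorname{trace}(X) \ \text{ s.t. } \ \|M - MX\| \le \epsilon,\ X_{ij} \le X_{ii} \le 1 \ \forall i,j. \] Then: (a) the optimal values of (P1) and (P2) coincide; (b) every optimal solution of (P2) is an optimal solution of (P1); (c) for every optimal solution $X^*$ of (P1) there exists an optimal solution $X^\dagger$ of (P2) with $\|M - MX^\dagger\| = \|M - MX^*\|$ (obtained from $X^*$ by raising diagonal entries to their row maxima and rescaling the off-diagonal entries of the corresponding columns).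
   Context: For $X \in \mathbb{R}^{n,n}$, $\|X\|_{1,\infty} := \sum_{i=1}^n \max_{1\le j\le n} |X_{ij}|$, the sum over rows of the $\ell_\infty$ norms of the rows. $\mathbb{R}^{n,n}_+$ denotes entrywise nonnegative $n\times n$ matrices. Both problems are feasible (e.g. $X = I$) and have compact feasible sets, so optimal solutions exist. *)

From HB Require Import structures.
From mathcomp Require Import all_boot all_order all_algebra.
Set Implicit Arguments. Unset Strict Implicit. Unset Printing Implicit Defensive.
Import Order.TTheory GRing.Theory Num.Theory.
Local Open Scope ring_scope.

Definition is_vnorm (R : realFieldType) (m : nat) (N : 'cV[R]_m -> R) : Prop :=
  [/\ forall x, 0 <= N x,
      forall x, N x = 0 -> x = 0,
      forall (a : R) x, N (a *: x) = `|a| * N x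
    & forall x y, N (x + y) <= N x + N y].

Definition colnorm (R : realFieldType) (m n : nat) (alpha : 'I_n -> R)
  (N : 'cV[R]_m -> R) (A : 'M[R]_(m, n)) : R :=
  \sum_(i < n) alpha i * N (col i A).

Definition norm1inf (R : realFieldType) (n : nat) (X : 'M[R]_n) : R :=
  \sum_(i < n) \big[Num.max/0]_(j < n) `|X i j|.

Definition feasP1 (R : realFieldType) (m n : nat) (M : 'M[R]_(m, n))
  (alpha : 'I_n -> R) (N : 'cV[R]_m -> R) (eps : R) (X : 'M[R]_n) : Prop :=
  (forall i j, 0 <= X i j) /\
  colnorm alpha N (M - M *m X) <= eps /\
  (forall i j, X i j <= 1).

Definition feasP2 (R : realFieldType) (m n : nat) (M : 'M[R]_(m, n))
  (alpha : 'I_n -> R) (N : 'cV[R]_m -> R) (eps : R) (X : 'M[R]_n) : Prop :=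
  (forall i j, 0 <= X i j) /\
  colnorm alpha N (M - M *m X) <= eps /\
  (forall i j, X i j <= X i i /\ X i i <= 1).

Definition optP1 (R : realFieldType) (m n : nat) (M : 'M[R]_(m, n))
  (alpha : 'I_n -> R) (N : 'cV[R]_m -> R) (eps : R) (X : 'M[R]_n) : Prop :=
  feasP1 M alpha N eps X /\
  forall Y, feasP1 M alpha N eps Y -> norm1inf X <= norm1inf Y.

Definition optP2 (R : realFieldType) (m n : nat) (M : 'M[R]_(m, n))
  (alpha : 'I_n -> R) (N : 'cV[R]_m -> R) (eps : R) (X : 'M[R]_n) : Prop :=
  feasP2 M alpha N eps X /\
  forall Y, feasP2 M alpha N eps Y -> \tr X <= \tr Y.

Definition is_glb (R : realFieldType) (S : R -> Prop) (v : R) : Prop :=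
  (forall r, S r -> v <= r) /\ (forall w, (forall r, S r -> w <= r) -> w <= v).

Definition valP1 (R : realFieldType) (m n : nat) (M : 'M[R]_(m, n))
  (alpha : 'I_n -> R) (N : 'cV[R]_m -> R) (eps : R) (v : R) : Prop :=
  is_glb (fun r => exists X, feasP1 M alpha N eps X /\ r = norm1inf X) v.

Definition valP2 (R : realFieldType) (m n : nat) (M : 'M[R]_(m, n))
  (alpha : 'I_n -> R) (N : 'cV[R]_m -> R) (eps : R) (v : R) : Prop :=
  is_glb (fun r => exists X, feasP2 M alpha N eps X /\ r = \tr X) v.

(** Any (P1)-feasible X can be turned into a (P2)-feasible matrix of trace
    ||X||_{1,oo} by rescaling column i of I - X by
    c_i = (1 - max_j X_ij) / (1 - X_ii) in [0, 1]: this lifts the diagonal to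
    the row maxima and multiplies column i of the residual M - MX by c_i, so
    the residual norm does not grow.  Conversely a (P2)-feasible matrix is
    (P1)-feasible with ||X||_{1,oo} = trace X.  Hence both problems have the
    same set of objective values.  If the rescaling of a (P1)-optimal X
    strictly decreased the residual norm below eps, shrinking the rescaled
    matrix towards 0 would keep it feasible and lower its trace, contradicting
    optimality. *)
From HB Require Import structures.
From mathcomp Require Import all_boot all_order all_algebra.
From mathcomp Require Import ring lra.
Import Order.TTheory GRing.Theory Num.Theory.
Set Implicit Arguments. Unset Strict Implicit. Unset Printing Implicit Defensive.
Local Open Scope ring_scope.

Lemma is_glb_ext (R : realFieldType) (S1 S2 : R -> Prop) (v : R) :
  (forall r, S1 r <-> S2 r) -> is_glb S1 v <-> is_glb S2 v.
Proof.
move=> eqS; split=> -[lb glb]; split=> [r /eqS /lb //|w hw].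
  by apply: glb => r /eqS; exact: hw.
by apply: glb => r /eqS; exact: hw.
Qed.

Lemma exists_convex_comb_le (R : realFieldType) (c b e : R) : b < e ->
  exists t, [/\ 0 < t, t < 1 & (1 - t) * c + t * b <= e].
Proof.
move=> lt_be; have [le_ce|lt_ec] := leP c e.
  by exists 2^-1; split; lra.
have cb_gt0 : 0 < c - b by lra.
exists ((c - e) / (c - b)); split.
- by apply: divr_gt0; lra.
- by rewrite ltr_pdivrMr // mul1r; lra.
- suff -> : (1 - (c - e) / (c - b)) * c + (c - e) / (c - b) * b = e by [].
  by field; apply/eqP; lra.
Qed.

Section ColumnNorm.
Variables (R : realFieldType) (m n : nat) (alpha : 'I_n -> R) (N : 'cV[R]_m -> R).
Hypotheses (alpha_gt0 : forall i, 0 < alpha i) (normN : is_vnorm N).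
Local Notation cnorm := (colnorm alpha N).

Lemma colnormD (A B : 'M[R]_(m, n)) : cnorm (A + B) <= cnorm A + cnorm B.
Proof.
case: normN => _ _ _ ND; rewrite /colnorm -big_split /=; apply: ler_sum => i _.
rewrite linearD -mulrDr /=; apply: ler_wpM2l; [exact: ltW | exact: ND].
Qed.

Lemma colnormZ (a : R) (A : 'M[R]_(m, n)) : cnorm (a *: A) = `|a| * cnorm A.
Proof.
case: normN => _ _ NZ _; rewrite /colnorm mulr_sumr; apply: eq_bigr => i _.
by rewrite linearZ NZ mulrCA.
Qed.

Lemma colnorm_mul_diag_le (A : 'M[R]_(m, n)) (c : 'rV[R]_n) :
  (forall i, `|c 0 i| <= 1) -> cnorm (A *m diag_mx c) <= cnorm A.
Proof.
case: normN => N_ge0 _ NZ _ c_le1; apply: ler_sum => i _.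
have -> : col i (A *m diag_mx c) = c 0 i *: col i A.
  by apply/matrixP => k l; rewrite mul_mx_diag !mxE mulrC.
rewrite NZ; apply: ler_wpM2l; first exact: ltW.
by rewrite -[leRHS]mul1r ler_wpM2r.
Qed.

End ColumnNorm.

Section RowMax.
Variables (R : realFieldType) (n : nat).
Implicit Types X : 'M[R]_n.

Definition rowmax X i : R := \big[Num.max/0]_(j < n) `|X i j|.

Lemma rowmax_ge X i j : `|X i j| <= rowmax X i.
Proof. exact: le_bigmax. Qed.

Lemma rowmax_ge0 X i : 0 <= rowmax X i.
Proof. exact: le_trans (normr_ge0 _) (rowmax_ge X i i). Qed.

Lemma rowmax_le X i b : 0 <= b -> (forall j, `|X i j| <= b) -> rowmax X i <= b.
Proof. by move=> b_ge0 le_b; apply: bigmax_le. Qed.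

Lemma norm1inf_eq0 X : norm1inf X = 0 -> X = 0.
Proof.
move=> X0; apply/matrixP => i j; rewrite mxE; apply/normr0_eq0/le_anti.
have rowmax0 : rowmax X i = 0.
  by apply: (psumr_eq0P _ X0) => // k _; exact: rowmax_ge0.
by rewrite normr_ge0 -rowmax0 rowmax_ge.
Qed.

Lemma norm1inf_tr X : (forall i j, 0 <= X i j) -> (forall i j, X i j <= X i i) ->
  norm1inf X = \tr X.
Proof.
move=> X_ge0 le_diag; apply: eq_bigr => i _; apply/le_anti/andP; split.
  by apply: rowmax_le => // j; rewrite ger0_norm.
by have := rowmax_ge X i i; rewrite ger0_norm.
Qed.

End RowMax.

Section RaiseDiagonal.
Variables (R : realFieldType) (n : nat).
Implicit Types X : 'M[R]_n.

(* When X i i = 1 the coefficient is the junk value 0 / 0 = 0, which is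
   harmless: then the row maximum is 1 as well. *)
Definition raise_coef X : 'rV[R]_n := \row_i ((1 - rowmax X i) / (1 - X i i)).

Definition raise_diag X : 'M[R]_n :=
  1%:M - (1%:M - X) *m diag_mx (raise_coef X).

Lemma raise_diag_entry X k i :
  raise_diag X k i = (k == i)%:R - ((k == i)%:R - X k i) * raise_coef X 0 i.
Proof. by rewrite /raise_diag mul_mx_diag !mxE. Qed.

Lemma raise_diag0 : raise_diag 0 = 0.
Proof.
have rowmax0 i : rowmax (0 : 'M[R]_n) i = 0.
  by apply/le_anti; rewrite rowmax_ge0 rowmax_le // => j; rewrite mxE normr0.
apply/matrixP => k i; rewrite raise_diag_entry !mxE rowmax0.
by rewrite !subr0 divr1 mulr1 subrr.
Qed.

Lemma residual_raise_diag (m : nat) (M : 'M[R]_(m, n)) X :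
  M - M *m raise_diag X = (M - M *m X) *m diag_mx (raise_coef X).
Proof.
by rewrite /raise_diag mulmxBr mulmx1 mulmxA mulmxBr mulmx1 opprB addrC subrK.
Qed.

Section Bounded.
Variable X : 'M[R]_n.
Hypotheses (X_ge0 : forall i j, 0 <= X i j) (X_le1 : forall i j, X i j <= 1).

Lemma rowmax_le1 i : rowmax X i <= 1.
Proof. by apply: rowmax_le => // j; rewrite ger0_norm. Qed.

Lemma diag_le_rowmax i : X i i <= rowmax X i.
Proof. by have := rowmax_ge X i i; rewrite ger0_norm. Qed.

Lemma raise_coef_ge0 i : 0 <= raise_coef X 0 i.
Proof.
rewrite mxE; have := rowmax_le1 i; have := X_le1 i i.
by move=> *; apply: divr_ge0; lra.
Qed.

Lemma raise_coef_le1 i : raise_coef X 0 i <= 1.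
Proof.
rewrite mxE; have := diag_le_rowmax i; have := X_le1 i i.
rewrite le_eqVlt => /predU1P[->|lt_1]; first by rewrite subrr invr0 mulr0.
by move=> ?; rewrite ler_pdivrMr ?mul1r; lra.
Qed.

Lemma raise_diag_diag i : raise_diag X i i = rowmax X i.
Proof.
rewrite raise_diag_entry eqxx mxE /=.
have := diag_le_rowmax i; have := rowmax_le1 i.
have := X_le1 i i; rewrite le_eqVlt => /predU1P[->|lt_1] le_1 ge_diag.
  by rewrite subrr mul0r subr0; lra.
by field; apply/eqP; lra.
Qed.

Lemma raise_diag_offdiag k i : k != i -> raise_diag X k i = X k i * raise_coef X 0 i.
Proof. by move=> /negbTE ne_ki; rewrite raise_diag_entry ne_ki /= !sub0r mulNr opprK. Qed.

Lemma raise_diag_ge0 k i : 0 <= raise_diag X k i.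
Proof.
have [->|ne_ki] := eqVneq k i; first by rewrite raise_diag_diag rowmax_ge0.
by rewrite raise_diag_offdiag // mulr_ge0 ?raise_coef_ge0.
Qed.

Lemma raise_diag_le_diag k i : raise_diag X k i <= raise_diag X k k.
Proof.
have [->|ne_ki] := eqVneq k i; first by [].
rewrite raise_diag_offdiag // raise_diag_diag.
have := rowmax_ge X k i; rewrite ger0_norm //; apply: le_trans.
by rewrite -[leRHS]mulr1 ler_wpM2l ?raise_coef_le1.
Qed.

Lemma tr_raise_diag : \tr (raise_diag X) = norm1inf X.
Proof. by apply: eq_bigr => i _; rewrite raise_diag_diag. Qed.

End Bounded.
End RaiseDiagonal.

Section Problems.
Variables (R : realFieldType) (m n : nat) (M : 'M[R]_(m, n)) (eps : R)
  (alpha : 'I_n -> R) (N : 'cV[R]_m -> R).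
Hypotheses (alpha_gt0 : forall i, 0 < alpha i) (normN : is_vnorm N).
Local Notation cnorm := (colnorm alpha N).
Local Notation feas1 := (feasP1 M alpha N eps).
Local Notation feas2 := (feasP2 M alpha N eps).
Implicit Types X Y Z : 'M[R]_n.

Lemma feasP2_feasP1 X : feas2 X -> feas1 X.
Proof.
case=> X_ge0 [res le_diag]; do 2!split=> //.
by move=> i j; have [] := le_diag i j; exact: le_trans.
Qed.

Lemma feasP2_norm1inf X : feas2 X -> norm1inf X = \tr X.
Proof. by case=> X_ge0 [_ le_diag]; apply: norm1inf_tr => // i j; case: (le_diag i j). Qed.

Lemma residual_raise_diag_le X : (forall i j, 0 <= X i j) -> (forall i j, X i j <= 1) ->
  cnorm (M - M *m raise_diag X) <= cnorm (M - M *m X).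
Proof.
move=> X_ge0 X_le1; rewrite residual_raise_diag.
apply: colnorm_mul_diag_le => // i.
by rewrite ger0_norm ?raise_coef_le1 ?raise_coef_ge0.
Qed.

Lemma feasP1_raise_diag X : feas1 X -> feas2 (raise_diag X).
Proof.
case=> X_ge0 [res X_le1]; split; first exact: raise_diag_ge0.
split; first exact: le_trans (residual_raise_diag_le X_ge0 X_le1) res.
move=> i j; split; first exact: raise_diag_le_diag.
by rewrite raise_diag_diag // rowmax_le1.
Qed.

Lemma objective_values_eq r :
  (exists X, feas1 X /\ r = norm1inf X) <-> (exists X, feas2 X /\ r = \tr X).
Proof.
split=> -[X [fX ->]].
  exists (raise_diag X); split; first exact: feasP1_raise_diag.
  by case: fX => X_ge0 [_ X_le1]; rewrite tr_raise_diag.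
by exists X; split; [exact: feasP2_feasP1 | rewrite feasP2_norm1inf].
Qed.

Lemma feasP2_scale Y t : feas2 Y -> 0 <= t <= 1 ->
  (1 - t) * cnorm M + t * cnorm (M - M *m Y) <= eps -> feas2 (t *: Y).
Proof.
case=> Y_ge0 [_ le_diag] /andP[t_ge0 t_le1] res; split.
  by move=> i j; rewrite mxE mulr_ge0.
split.
  have -> : M - M *m (t *: Y) = (1 - t) *: M + t *: (M - M *m Y).
    by rewrite -scalemxAr scalerBr scalerBl scale1r addrA subrK.
  apply: le_trans (colnormD _ _ _ _) _ => //.
  by rewrite !colnormZ // !ger0_norm ?subr_ge0.
move=> i j; rewrite !mxE; have [le_ij le_i1] := le_diag i j; split.
  exact: ler_wpM2l.
by rewrite -[1]mulr1 ler_pM.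
Qed.

Lemma feasP2_tr_decrease Y : feas2 Y -> cnorm (M - M *m Y) < eps -> 0 < \tr Y ->
  exists Z, feas2 Z /\ \tr Z < \tr Y.
Proof.
move=> fY res tr_gt0.
have [t [t_gt0 t_lt1 le_eps]] := exists_convex_comb_le (cnorm M) res.
exists (t *: Y); split.
  by apply: feasP2_scale => //; rewrite ltW ?ltW.
by rewrite mxtraceZ -[ltRHS]mul1r ltr_pM2r.
Qed.

End Problems.

Theorem theorem2 (R : realFieldType) (m n : nat) (M : 'M[R]_(m, n))
  (eps : R) (alpha : 'I_n -> R) (N : 'cV[R]_m -> R)
  (heps : 0 <= eps) (halpha : forall i, 0 < alpha i) (hN : is_vnorm N) :
  (forall v, valP1 M alpha N eps v <-> valP2 M alpha N eps v) /\
  (forall X, optP2 M alpha N eps X -> optP1 M alpha N eps X) /\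
  (forall Xs, optP1 M alpha N eps Xs ->
     exists Xd, optP2 M alpha N eps Xd /\
       colnorm alpha N (M - M *m Xd) = colnorm alpha N (M - M *m Xs)).
Proof.
have raise_opt Y : feasP1 M alpha N eps Y -> \tr (raise_diag Y) = norm1inf Y.
  by case=> Y_ge0 [_ Y_le1]; exact: tr_raise_diag.
split; first by move=> v; apply: is_glb_ext; exact: objective_values_eq.
split.
  move=> X [fX optX]; split=> [|Y fY]; first exact: feasP2_feasP1.
  rewrite (feasP2_norm1inf fX) -(raise_opt Y fY).
  exact/optX/(feasP1_raise_diag halpha hN).
move=> Xs [fXs optXs]; have fXd := feasP1_raise_diag halpha hN fXs.
have optXd : optP2 M alpha N eps (raise_diag Xs).
  split=> // Y fY; rewrite (raise_opt Xs fXs) -(feasP2_norm1inf fY).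
  exact/optXs/feasP2_feasP1.
exists (raise_diag Xs); split=> //.
have [Xs_ge0 [res Xs_le1]] := fXs.
have [/norm1inf_eq0 ->|obj_gt0] := eqVneq (norm1inf Xs) 0; first by rewrite raise_diag0.
apply/le_anti; rewrite residual_raise_diag_le //= leNgt; apply/negP => lt_res.
have tr_gt0 : 0 < \tr (raise_diag Xs).
  rewrite (raise_opt Xs fXs) lt_def obj_gt0.
  by apply: sumr_ge0 => i _; exact: rowmax_ge0.
have [Z [fZ lt_tr]] := feasP2_tr_decrease halpha hN fXd (lt_le_trans lt_res res) tr_gt0.
by move: lt_tr; rewrite ltNge (proj2 optXd _ fZ).
Qed.
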